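(* For every set of reals $X$, the following are equivalent: (a) $X$ satisfies $\mathrm{Split}(\mathrm T,\mathrm T)$; (b) $X$ satisfies $\mathrm{Split}(\mathrm T,\Omega)$; (c) $X$ satisfies $\mathrm{Split}(\mathrm T,\Lambda)$.
   Context: A set of reals is an infinite topological space homeomorphic to a subset of $\mathbb R$. A cover of a space $X$ is a family $\mathcal U$ of subsets of $X$ with $\bigcup\mathcal U=X$ such that $X\not\subseteq U$ for every $U\in\mathcal U$. A cover $\mathcal U$ is: a large cover if every $x\in X$ lies in infinitely many members of $\mathcal U$; an $\omega$-cover if every finite subset of $X$ is contained in some member of $\mathcal U$; a $\tau$-cover if it is a large cover and for all $x,y\in X$ at least one of $\{U\in\mathcal U: x\in U, y\notin U\}$, $\{U\in\mathcal U: y\in U, x\notin U\}$ is finite. $\Lambda,\Omega,\mathrm T$ denote the collections of open large covers, open $\omega$-covers and open $\tau$-covers of $X$. For collections $\mathfrak U,\mathfrak V$ of covers of $X$, $X$ satisfies $\mathrm{Split}(\mathfrak U,\mathfrak V)$ if every $\mathcal U\in\mathfrak U$ can be partitioned into two disjoint subfamilies $\mathcal V,\mathcal W$ each of which contains a subfamily belonging to $\mathfrak V$. *)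

From HB Require Import structures.
From mathcomp Require Import all_boot all_order all_algebra.
From mathcomp Require Import all_classical all_reals topology normedtype.
Set Implicit Arguments. Unset Strict Implicit. Unset Printing Implicit Defensive.
Import Order.TTheory GRing.Theory Num.Theory numFieldTopology.Exports.
Local Open Scope classical_set_scope.

Section Covers.
Variable R : realType.

Definition relopen (X U : set R) : Prop := exists V : set R, open V /\ U = V `&` X.

Definition is_cover (X : set R) (U : set (set R)) : Prop :=
  (forall A, U A -> A `<=` X) /\
  (forall x, X x -> exists A, U A /\ A x) /\
  (forall A, U A -> ~ (X `<=` A)).

Definition open_cover (X : set R) (U : set (set R)) : Prop :=
  is_cover X U /\ (forall A, U A -> relopen X A).

Definition large_cover (X : set R) (U : set (set R)) : Prop :=
  forall x, X x -> ~ finite_set [set A | U A /\ A x].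

Definition omega_cover (X : set R) (U : set (set R)) : Prop :=
  forall F : set R, finite_set F -> F `<=` X -> exists A, U A /\ F `<=` A.

Definition tau_cover (X : set R) (U : set (set R)) : Prop :=
  large_cover X U /\
  forall x y, X x -> X y ->
    finite_set [set A | U A /\ A x /\ ~ A y] \/
    finite_set [set A | U A /\ A y /\ ~ A x].

Definition Lambda (X : set R) : set (set (set R)) :=
  [set U | open_cover X U /\ large_cover X U].
Definition Omega (X : set R) : set (set (set R)) :=
  [set U | open_cover X U /\ omega_cover X U].
Definition Tau (X : set R) : set (set (set R)) :=
  [set U | open_cover X U /\ tau_cover X U].

Definition SplitCov (UU VV : set (set (set R))) : Prop :=
  forall U, UU U -> exists V W : set (set R),
    V `&` W = set0 /\ V `|` W = U /\
    (exists V', V' `<=` V /\ VV V') /\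
    (exists W', W' `<=` W /\ VV W').

End Covers.

(* In a tau-cover U, put x <= y when only finitely many members contain x but
   miss y.  This preorder is total (the tau condition) and transitive, so a
   finite F included in X has a least point x; of the infinitely many members
   containing x only finitely many miss a point of F, hence tau-covers are
   omega-covers.  Omega-covers are large, and a large subfamily of a tau-cover
   is again a tau-cover.  So Split(T,T) => Split(T,Omega) => Split(T,Lambda)
   => Split(T,T), each step shrinking the two parts to subfamilies. *)
From mathcomp Require Import all_boot all_classical all_reals topology normedtype.
Local Open Scope classical_set_scope.

Section CoverInclusions.
Variables (R : realType) (X : set R).
Implicit Types (U V : set (set R)) (F : set R).

Definition separating U (x y : R) := [set A | U A /\ A x /\ ~ A y].

Lemma separating_refl U x : separating U x x = set0.
Proof. by apply/seteqP; split => // A [_ []]. Qed.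

Lemma separating_trans U x y z :
  separating U x z `<=` separating U x y `|` separating U y z.
Proof.
by move=> A [UA [Ax nAz]]; case: (pselect (A y)) => Ay; [right|left].
Qed.

Lemma tau_cover_least U (s : seq R) : tau_cover X U -> [set` s] `<=` X ->
  s != [::] -> exists2 x, x \in s &
    forall y, y \in s -> finite_set (separating U x y).
Proof.
move=> [_ tau]; elim: s => [//|a s IH] asX _.
have Xa : X a by apply: asX; rewrite /= inE eqxx.
have sX : [set` s] `<=` X by move=> z zs; apply: asX; rewrite /= inE zs orbT.
have [->|s0] := eqVneq s [::].
  exists a; first by rewrite inE.
  by move=> y; rewrite mem_seq1 => /eqP ->; rewrite separating_refl.
have [x xs xleast] := IH sX s0.
have [xa|ax] := tau x a (sX x xs) Xa.
- exists x; first by rewrite inE xs orbT.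
  by move=> y; rewrite inE => /orP[/eqP ->|]; [|exact: xleast].
- exists a; first by rewrite inE eqxx.
  move=> y; rewrite inE => /orP[/eqP ->|ys]; first by rewrite separating_refl.
  apply: sub_finite_set (separating_trans U a x y) _.
  by rewrite finite_setU; split => //; exact: xleast.
Qed.

Lemma tau_cover_omega U : X !=set0 -> tau_cover X U -> omega_cover X U.
Proof.
move=> [x0 Xx0] tauU F finF FX.
have [large _] := tauU.
have [s Fs] := (finite_seqP F).1 finF; subst F.
have [->|s0] := eqVneq s [::].
  have /infinite_setN0 [A [UA _]] := large x0 Xx0.
  by exists A; split => // z; rewrite /= in_nil.
have [x xs xleast] := tau_cover_least _ _ tauU FX s0.
have missing_s_finite :
    finite_set [set A | U A /\ A x /\ ~ [set` s] `<=` A].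
  apply: (sub_finite_set _ (bigcup_finite (F := separating U x) finF xleast)).
  move=> A [UA [Ax /boolp.existsNP [y /boolp.not_implyP [ys nAy]]]].
  by exists y.
have /infinite_setN0 [A [[UA Ax] notmissing]] :=
  infinite_setD (large x (FX x xs)) missing_s_finite.
by exists A; split => //; apply: contrapT => nsA; exact: notmissing.
Qed.

Lemma omega_cover_large U : (forall A, U A -> ~ X `<=` A) ->
  omega_cover X U -> large_cover X U.
Proof.
move=> noX omegaU x Xx.
set S := [set A | U A /\ A x] => finS.
have witness A : exists y, S A -> X y /\ ~ A y.
  case: (pselect (S A)) => [[UA _]|nSA]; last by exists x.
  have /boolp.existsNP [y /boolp.not_implyP [Xy nAy]] := noX A UA.
  by exists y.
have [f fmiss] := boolp.choice witness.
have finF : finite_set (x |` (f @` S)).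
  by rewrite finite_setU; split; [exact: finite_set1|exact: finite_image].
have FX : x |` (f @` S) `<=` X.
  by move=> z [->//|[A SA <-]]; have [] := fmiss A SA.
have [B [UB FB]] := omegaU _ finF FX.
have SB : S B by split => //; apply: FB; left.
by have [_] := fmiss B SB; apply; apply: FB; right; exists B.
Qed.

Lemma tau_cover_sub U V : tau_cover X U -> V `<=` U -> large_cover X V ->
  tau_cover X V.
Proof.
move=> [_ tau] VU largeV; split => // x y Xx Xy.
by case: (tau x y Xx Xy) => fin; [left|right];
  apply: sub_finite_set fin => A [/VU].
Qed.

Lemma open_cover_sub U V : open_cover X U -> V `<=` U -> large_cover X V ->
  open_cover X V.
Proof.
move=> [[subX [_ noX]] relopenU] VU largeV.
split; last by move=> A /VU; exact: relopenU.
split; first by move=> A /VU; exact: subX.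
split; last by move=> A /VU; exact: noX.
by move=> x Xx; have /infinite_setN0 [A [VA Ax]] := largeV x Xx; exists A.
Qed.

Lemma Omega_sub_Lambda : Omega X `<=` Lambda X.
Proof.
move=> U [openU omegaU]; split => //.
by apply: omega_cover_large omegaU => A UA; have [[_ [_ noX]] _] := openU; exact: noX.
Qed.

Lemma Tau_sub_Omega : X !=set0 -> Tau X `<=` Omega X.
Proof. by move=> X0 U [openU tauU]; split => //; exact: tau_cover_omega. Qed.

Lemma Lambda_subfamily_Tau U V : Tau X U -> V `<=` U -> Lambda X V -> Tau X V.
Proof.
move=> [openU tauU] VU [_ largeV]; split.
- exact: open_cover_sub openU VU largeV.
- exact: tau_cover_sub tauU VU largeV.
Qed.

End CoverInclusions.

Lemma SplitCov_weaken (R : realType) (UU VV VV' : set (set (set R))) :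
  (forall U V, UU U -> V `<=` U -> VV V -> VV' V) ->
  SplitCov UU VV -> SplitCov UU VV'.
Proof.
move=> VV_VV' splitVV U UUU.
have [V [W [VW0 [VWU [[V' [V'V VVV']] [W' [W'W VVW']]]]]]] := splitVV U UUU.
exists V, W; do 2!split => //; split.
- by exists V'; split => //; apply: VV_VV' UUU _ VVV'; rewrite -VWU;
    exact: subset_trans V'V (@subsetUl _ _ _).
- by exists W'; split => //; apply: VV_VV' UUU _ VVW'; rewrite -VWU;
    exact: subset_trans W'W (@subsetUr _ _ _).
Qed.

Theorem theorem2p1 (R : realType) (X : set R) (Xinf : ~ finite_set X) :
  (SplitCov (Tau X) (Tau X) <-> SplitCov (Tau X) (Omega X)) /\
  (SplitCov (Tau X) (Omega X) <-> SplitCov (Tau X) (Lambda X)).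
Proof.
have TO := @Tau_sub_Omega R X (infinite_setN0 Xinf).
have OL := @Omega_sub_Lambda R X.
have LT := @Lambda_subfamily_Tau R X.
split; split; apply: SplitCov_weaken => U V TU VU.
- exact: TO.
- by move=> /OL; exact: LT TU VU.
- exact: OL.
- by move=> /(LT _ _ TU VU); exact: TO.
Qed.
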